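(* Let $X_i=E_{i,i+1}+E_{4n-1-i,4n-i}$ for $1\le i\le 2n-1$ (so $X_{2n-1}=E_{2n-1,2n}+E_{2n,2n+1}$), and let $s_{i_1}\cdots s_{i_N}$ be the word $((s_1s_3\cdots s_{2n-1})(s_2s_4\cdots s_{2n-2}))^{2n-1}$. Then every matrix of the form $e^{t_1X_{i_1}}e^{t_2X_{i_2}}\cdots e^{t_NX_{i_N}}$ with all $t_j>0$ (i.e. every element of the positive subsemigroup of $\mathrm{SO}(2n,2n-1)$ for the diagonal Cartan subalgebra, simple roots $a_i-a_{i+1}$, $1\le i\le 2n-1$, and root vectors $X_i$) lies in the positive subsemigroup of $\mathrm{SL}(4n-1,\mathbb{R})$, namely the set of products $e^{u_1E_{j_1,j_1+1}}\cdots e^{u_ME_{j_M,j_M+1}}$ with all $u_k>0$ along the reduced word $(s_1s_{4n-2}s_3s_{4n-4}\cdots s_{2n-1}s_{2n}s_{2n-1}s_2s_{4n-3}s_4s_{4n-5}\cdots s_{2n-2}s_{2n})^{2n-1}$ for the longest Weyl group element; in particular it is upper triangular totally positive (all minors not forced to vanish by upper triangularity are strictly positive).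
   Context: $E_{i,j}$ is the $(4n-1)\times(4n-1)$ matrix with a $1$ in position $(i,j)$ and zeros elsewhere. $\mathrm{SO}(2n,2n-1)$ is the group of determinant-one matrices $M$ with $M^TJM=J$, $J$ antidiagonal with $J_{i,4n-i}=(-1)^i$. $s_i$ denotes the simple reflection associated to the $i$-th simple root. *)

From HB Require Import structures.
From mathcomp Require Import all_boot all_order all_algebra.
From mathcomp Require Import reals.
Set Implicit Arguments. Unset Strict Implicit. Unset Printing Implicit Defensive.
Import Order.TTheory GRing.Theory Num.Theory.
Local Open Scope ring_scope.

Section Defs.
Variable R : realType.

(* Matrix units with the paper's 1-based indices: E m i j has a 1 at
   position (i,j) (1 <= i,j <= m) and zeros elsewhere. *)
Definition E (m i j : nat) : 'M[R]_m :=
  \matrix_(a < m, b < m) ((nat_of_ord a == i.-1) && (nat_of_ord b == j.-1))%:R.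

Definition mxpow (m : nat) (A : 'M[R]_m) (k : nat) : 'M[R]_m :=
  iter k (mulmx A) 1%:M.

(* For the matrices to which it is applied below
   (real multiples of strictly upper triangular m x m matrices, which are
   nilpotent with A^m = 0) this is exactly e^A. *)
Definition expm (m : nat) (A : 'M[R]_m) : 'M[R]_m :=
  \sum_(k < m) (k`!%:R)^-1 *: mxpow A k.

Definition dim (n : nat) : nat := (4 * n - 1)%N.

Definition Xso (n i : nat) : 'M[R]_(dim n) :=
  E (dim n) i i.+1 + E (dim n) (4 * n - 1 - i) (4 * n - i).

Definition Xsl (n j : nat) : 'M[R]_(dim n) := E (dim n) j j.+1.

Definition word_prod (m : nat) (X : nat -> 'M[R]_m) (w : seq nat) (ts : seq R)
  : 'M[R]_m :=
  foldr (fun p M => expm (p.2 *: X p.1) *m M) 1%:M (zip w ts).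

Definition in_pos_semigroup (m : nat) (X : nat -> 'M[R]_m) (w : seq nat)
  (M : 'M[R]_m) : Prop :=
  exists us : seq R,
    size us = size w /\ all (fun u => 0 < u) us /\ M = word_prod X w us.

Definition upper_TP (m : nat) (M : 'M[R]_m) : Prop :=
  (forall i j : 'I_m, (j < i)%N -> M i j = 0) /\
  (forall (k : nat) (I J : 'I_k -> 'I_m),
      (forall a b : 'I_k, (a < b)%N -> (I a < I b)%N) ->
      (forall a b : 'I_k, (a < b)%N -> (J a < J b)%N) ->
      (forall a : 'I_k, (I a <= J a)%N) ->
      0 < \det (\matrix_(a < k, b < k) M (I a) (J b))).
End Defs.

(* The word ((s_1 s_3 ... s_{2n-1})(s_2 s_4 ... s_{2n-2}))^{2n-1}. *)
Local Open Scope nat_scope.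
Definition so_block (n : nat) : seq nat :=
  [seq (2 * k).+1 | k <- iota 0 n] ++ [seq (2 * k).+2 | k <- iota 0 n.-1].
Definition so_word (n : nat) : seq nat :=
  flatten (nseq (2 * n - 1) (so_block n)).

(* The word (s_1 s_{4n-2} s_3 s_{4n-4} ... s_{2n-1} s_{2n} s_{2n-1}
              s_2 s_{4n-3} s_4 s_{4n-5} ... s_{2n-2} s_{2n+1})^{2n-1}. *)
Definition sl_block (n : nat) : seq nat :=
  flatten [seq [:: (2 * k).+1; 4 * n - 2 - 2 * k] | k <- iota 0 n]
  ++ [:: (2 * n).-1]
  ++ flatten [seq [:: (2 * k).+2; 4 * n - 3 - 2 * k] | k <- iota 0 n.-1].
Definition sl_word (n : nat) : seq nat :=
  flatten (nseq (2 * n - 1) (sl_block n)).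

(* Each factor [e^{t X_i}] is a product of elementary matrices
   [x_j(u) = 1 + u E_{j,j+1}] with positive parameters: for [i < 2n-1] the two
   summands of [X_i] have all products zero, so
   [e^{t X_i} = x_i(t) x_{4n-1-i}(t)], while for [i = 2n-1] one has
   [e^{t X_{2n-1}} = x_{2n-1}(t/2) x_{2n}(t) x_{2n-1}(t/2)].  Substituting
   turns the word for SO(2n,2n-1) into the word for SL(4n-1).
   Left multiplication by [x_j(u)] adds [u] times row [j+1] to row [j], so
   expanding a minor along the word gives a sum of nonnegative terms, one for
   each way of successively raising its row indices along the word
   (Lindstrom's lemma); the minor is positive as soon as one way exists.
   Raising is monotone, so it suffices to raise the lowest row set
   [{1..k}] to the highest one [{m-k+1..m}], and for the given word this is
   done by an explicit schedule saying at which letter each row moves. *)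

From Pilot Require Import Defs.
From HB Require Import structures.
From mathcomp Require Import all_boot all_order all_algebra.
From mathcomp Require Import reals zify ring.
From Stdlib Require Import Classical.
Set Implicit Arguments. Unset Strict Implicit. Unset Printing Implicit Defensive.
Import Order.TTheory GRing.Theory Num.Theory.
Import Defs.

Section Lifts.
Variable k : nat.

Definition upd (p : nat -> nat) (a v : nat) : nat -> nat :=
  fun b => if b == a then v else p b.

Definition tuple_eq (p q : nat -> nat) := forall a, a < k -> p a = q a.
Definition tuple_le (p q : nat -> nat) := forall a, a < k -> p a <= q a.
Definition increasing (p : nat -> nat) := forall a b, a < b -> b < k -> p a < p b.

(* Row tuples are 0-based while letters are 1-based: the letter [j], i.e.
   the factor [1 + u E_{j,j+1}], raises an entry [j.-1] to [j]. *)
Fixpoint lifts (w : seq nat) (p q : nat -> nat) : Prop :=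
  match w with
  | [::] => tuple_eq p q
  | j :: w' => lifts w' p q \/
      exists a, [/\ a < k, 0 < j, p a = j.-1, (a.+1 < k -> p a.+1 <> j)
                  & lifts w' (upd p a j) q]
  end.

Lemma lifts_ext w p q p' q' :
  lifts w p q -> tuple_eq p p' -> tuple_eq q q' -> lifts w p' q'.
Proof.
elim: w p p' => [|j w IH] p p' /= H Hp Hq.
  by move=> a ak; rewrite -Hp // -Hq // H.
case: H => [H|[a [ak j0 pa pf H]]]; first by left; exact: IH H Hp Hq.
right; exists a; split => //.
- by rewrite -Hp.
- by move=> ak1; rewrite -Hp //; apply: pf.
apply: IH H _ Hq => b bk; rewrite /upd; case: eqP => // _; exact: Hp.
Qed.

Lemma lifts_cat u v p r q : lifts u p r -> lifts v r q -> lifts (u ++ v) p q.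
Proof.
elim: u p => [|j u IH] p /= H1 H2.
  by apply: lifts_ext H2 _ _ => a ak; [rewrite H1|].
case: H1 => [H1|[a [ak j0 pa pf H1]]]; first by left; exact: IH H1 H2.
by right; exists a; split => //; exact: IH H1 H2.
Qed.

Lemma increasing_inj p a b :
  increasing p -> a < k -> b < k -> p a = p b -> a = b.
Proof.
move=> ip ak bk e; case: (ltngtP a b) => [ab|ba|//].
- by have := ip _ _ ab bk; rewrite e ltnn.
- by have := ip _ _ ba ak; rewrite e ltnn.
Qed.

Lemma increasing_upd p a j : increasing p -> a < k -> p a = j.-1 -> 0 < j ->
  (a.+1 < k -> p a.+1 <> j) -> increasing (upd p a j).
Proof.
move=> ip ak pa j0 pf b c bc ck; rewrite /upd.
case: (eqVneq b a) => [eb|nb]; case: (eqVneq c a) => [ec|nc]; try lia.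
- subst b.
  have a1k : a.+1 < k by lia.
  have := pf a1k; have := ip a a.+1 (ltnSn _) a1k.
  case: (ltnP a.+1 c) => [a1c|ca1]; last first.
    by have e : c = a.+1 := ltac:(lia); rewrite e; lia.
  have := ip _ _ a1c ck; lia.
- subst c; have := ip b a; lia.
- exact: ip.
Qed.

Lemma increasing_ge_index p a : increasing p -> a < k -> a <= p a.
Proof.
move=> ip; elim: a => [|a IH] ak //.
have := ip a a.+1 (ltnSn a) ak; have := IH (ltnW ak); lia.
Qed.

Lemma increasing_room p m a : increasing p -> (forall b, b < k -> p b < m) ->
  a < k -> p a + (k - a) <= m.
Proof.
move=> ip bd ak.
have H : forall d, a + d < k -> p a + d <= p (a + d).
  elim=> [|d IH] h; first by rewrite !addn0.
  have h' : a + d < k by lia.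
  have := IH h'; have := ip (a + d) (a + d.+1) ltac:(lia) h; lia.
have := H (k - a).-1 ltac:(lia); have := bd (a + (k - a).-1) ltac:(lia); lia.
Qed.

Definition greedy_step (j : nat) (p : nat -> nat) : nat -> nat := fun b =>
  if [&& b < k, 0 < j, p b == j.-1 & (b.+1 < k) ==> (p b.+1 != j)]
  then j else p b.

Definition greedy (w : seq nat) (p : nat -> nat) :=
  foldl (fun p j => greedy_step j p) p w.

Lemma greedy_stepP j p b : greedy_step j p b = p b \/
  [/\ b < k, 0 < j, p b = j.-1, greedy_step j p b = j
    & (b.+1 < k -> p b.+1 <> j)].
Proof.
rewrite /greedy_step; case: (boolP [&& _, _, _ & _]) => [|_]; last by left.
case/and4P => bk j0 /eqP pb H.
by right; split => // bk1; move: H; rewrite bk1 /= => /eqP.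
Qed.

Lemma increasing_greedy_step j p : increasing p -> increasing (greedy_step j p).
Proof.
move=> ip a b ab bk.
have ipab := ip a b ab bk.
have ak : a < k by lia.
have [ga|[_ j0 pa ga pf]] := greedy_stepP j p a;
have [gb|[_ _ pb gb _]] := greedy_stepP j p b; rewrite ?ga ?gb; try lia.
have a1k : a.+1 < k by lia.
have := pf a1k; have := ip a a.+1 (ltnSn a) a1k.
case: (ltnP a.+1 b) => [a1b|ba]; last first.
  by have e : b = a.+1 := ltac:(lia); rewrite e; lia.
have := ip a.+1 b a1b bk; lia.
Qed.

Lemma le_greedy_step j p : tuple_le p (greedy_step j p).
Proof. by move=> b bk; case: (greedy_stepP j p b) => [->|[_ _ pb -> _]] //; lia. Qed.

Lemma greedy_step_mono j p p' : increasing p -> increasing p' -> tuple_le p p' ->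
  tuple_le (greedy_step j p) (greedy_step j p').
Proof.
move=> ip ip' le b bk.
have lb := le b bk.
have [gpb|[_ j0 pb gpb pf]] := greedy_stepP j p b.
  by rewrite gpb; exact: leq_trans lb (le_greedy_step j p' bk).
rewrite gpb.
case: (ltnP (p' b) j) => lt; last exact: leq_trans lt (le_greedy_step j p' bk).
have p'b : p' b = j.-1 by lia.
suff -> : greedy_step j p' b = j by [].
rewrite /greedy_step bk j0 p'b eqxx /=.
case: (ltnP b.+1 k) => [b1k|kb] //=.
have h1 := pf b1k; have h2 := ip b b.+1 (ltnSn b) b1k; have h3 := le b.+1 b1k.
by have -> : p' b.+1 != j by apply/eqP; lia.
Qed.

Lemma greedy_step_ext j p p' :
  tuple_eq p p' -> tuple_eq (greedy_step j p) (greedy_step j p').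
Proof.
move=> e b bk; rewrite /greedy_step e //.
by case: (ltnP b.+1 k) => [b1k|kb]; first rewrite e.
Qed.

Lemma greedy_step_upd p a j : increasing p -> a < k -> p a = j.-1 -> 0 < j ->
  (a.+1 < k -> p a.+1 <> j) -> tuple_eq (greedy_step j p) (upd p a j).
Proof.
move=> ip ak pa j0 pf b bk; rewrite /upd /greedy_step.
case: (eqVneq b a) => [eb|ba].
  subst b; rewrite ak j0 pa eqxx /=; case: (ltnP a.+1 k) => [a1k|] //=.
  by have -> : p a.+1 != j by apply/eqP; exact: pf.
have -> : (p b == j.-1) = false.
  apply/eqP; case: (ltngtP b a) => [ba'|ab|e]; last by rewrite e eqxx in ba.
  - by have := ip _ _ ba' ak; lia.
  - by have := ip _ _ ab bk; lia.
by rewrite !andbF.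
Qed.

Lemma increasing_greedy w p : increasing p -> increasing (greedy w p).
Proof.
elim: w p => [|j w IH] p ip //=; apply: IH; exact: increasing_greedy_step.
Qed.

Lemma le_greedy w p : tuple_le p (greedy w p).
Proof.
elim: w p => [|j w IH] p /= b bk //.
exact: leq_trans (le_greedy_step j p bk) (IH _ b bk).
Qed.

Lemma greedy_mono w p p' : increasing p -> increasing p' -> tuple_le p p' ->
  tuple_le (greedy w p) (greedy w p').
Proof.
elim: w p p' => [|j w IH] p p' ip ip' le //=.
apply: IH; [exact: increasing_greedy_step|exact: increasing_greedy_step|].
exact: greedy_step_mono.
Qed.

Lemma greedy_ext w p p' : tuple_eq p p' -> tuple_eq (greedy w p) (greedy w p').
Proof.
elim: w p p' => [|j w IH] p p' e //=; apply: IH; exact: greedy_step_ext.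
Qed.

Lemma lifts_le_greedy w p q : increasing p -> lifts w p q -> tuple_le q (greedy w p).
Proof.
elim: w p => [|j w IH] p ip /=.
  by move=> H a ak; rewrite -H.
case=> [H|[a [ak j0 pa pf H]]].
  move=> b bk; apply: leq_trans (IH p ip H b bk) _.
  by apply: greedy_mono => //; [exact: increasing_greedy_step|exact: le_greedy_step].
move=> b bk; rewrite (greedy_ext w (greedy_step_upd ip ak pa j0 pf)) //.
exact: IH (increasing_upd ip ak pa j0 pf) H b bk.
Qed.

Lemma greedy_step_preimage j P q :
  increasing P -> increasing q -> tuple_le q (greedy_step j P) ->
  exists r, [/\ increasing r, tuple_le r P,
    forall a, a < k -> r a = q a \/ r a = P a & lifts [:: j] r q].
Proof.
move=> iP iq lqg.
case: (classic (exists a, [/\ a < k, 0 < j, P a = j.-1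
                            & (a.+1 < k -> P a.+1 <> j)])) =>
  [[a [ak j0 pa pf]]|nm]; last first.
  have lqP : tuple_le q P.
    move=> b bk; have := lqg b bk.
    case: (greedy_stepP j P b) => [-> //|[bk' j0 pb _ pf]].
    by case: nm; exists b.
  by exists q; split=> //; [by left|left].
have eu := greedy_step_upd iP ak pa j0 pf.
case: (leqP (q a) j.-1) => qa.
  exists q; split=> //; [|by left|by left].
  move=> b bk; have := lqg b bk; rewrite eu // /upd.
  by case: (eqVneq b a) => [->|] //; rewrite pa.
have qaj : q a = j by have := lqg a ak; rewrite eu // /upd eqxx; lia.
have lqu : forall b, b < k -> b != a -> q b <= P b.
  by move=> b bk ba; have := lqg b bk; rewrite eu // /upd (negbTE ba).
exists (upd q a j.-1); split.
- move=> b c bc ck; rewrite /upd.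
  case: (eqVneq b a) => [eb|ba]; case: (eqVneq c a) => [ca|ca]; try lia.
  + by subst b; have := iq _ _ bc ck; lia.
  + subst c; have := iq _ _ bc ck; have := lqu b (ltn_trans bc ck) ba.
    have := iP b a bc ck; lia.
  + exact: iq.
- move=> b bk; rewrite /upd; case: (eqVneq b a) => [->|ba]; first by rewrite pa.
  exact: lqu.
- by move=> b bk; rewrite /upd; case: eqP => [->|]; [right|left].
- right; exists a; split => //.
  + by rewrite /upd eqxx.
  + move=> a1k; rewrite /upd (_ : a.+1 == a = false); last by apply/eqP; lia.
    by have := iq _ _ (ltnSn a) a1k; lia.
  + by move=> b bk; rewrite /upd; case: (eqVneq b a) => [->|]; rewrite ?qaj.
Qed.

Lemma lifts_interval w p q : increasing p -> increasing q -> tuple_le p q ->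
  tuple_le q (greedy w p) -> lifts w p q.
Proof.
elim/last_ind: w q => [|w j IH] q ip iq lpq lqG.
  by move=> a ak; apply/eqP; rewrite eqn_leq lpq //; exact: lqG.
have lqg : tuple_le q (greedy_step j (greedy w p)).
  by move=> a ak; have := lqG a ak; rewrite /greedy foldl_rcons.
have [r [ir lrP rqP rq]] := greedy_step_preimage (increasing_greedy w ip) iq lqg.
rewrite -cats1; apply: lifts_cat (IH r ip ir _ lrP) rq => a ak.
by case: (rqP a ak) => ->; [exact: lpq|exact: le_greedy].
Qed.

Lemma lifts_of_extreme w m :
  lifts w (fun a => a) (fun a => m - k + a) ->
  forall p q, increasing p -> increasing q -> tuple_le p q ->
  (forall a, a < k -> q a < m) -> lifts w p q.
Proof.
move=> Hs p q ip iq lpq bq.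
have iid : increasing (fun a => a) by [].
have l1 := lifts_le_greedy iid Hs.
have l2 : tuple_le (greedy w (fun a => a)) (greedy w p).
  by apply: greedy_mono => // a ak; exact: increasing_ge_index.
apply: lifts_interval => // a ak.
have := l1 a ak; have := l2 a ak; have := increasing_room iq bq ak; lia.
Qed.

End Lifts.

(* A schedule [T a x] is the position in [w] at which entry [a] is raised
   from [x] to [x.+1]; entry [a] travels from [I a] to [J a]. *)
Section Schedule.
Variables (k : nat) (w : seq nat) (I J : nat -> nat) (T : nat -> nat -> nat).
Hypothesis incr_I : increasing k I.
Hypothesis incr_J : increasing k J.
Hypothesis le_IJ : tuple_le k I J.
Hypothesis sched_letter : forall a x, a < k -> I a <= x -> x < J a ->
  T a x < size w /\ nth 0 w (T a x) = x.+1.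
Hypothesis sched_incr : forall a x, a < k -> I a <= x -> x.+1 < J a ->
  T a x < T a x.+1.
Hypothesis sched_stagger : forall a x, a.+1 < k -> I a <= x -> x < J a ->
  I a.+1 <= x.+1 -> T a.+1 x.+1 < T a x.

Lemma increasing_of_succ p : (forall a, a.+1 < k -> p a < p a.+1) -> increasing k p.
Proof.
move=> H a b ab bk; elim: b ab bk => [|b IH] // ab bk.
case: (ltngtP a b) => [lt|gt|eq].
- have := IH lt (ltnW bk); have := H b bk; lia.
- lia.
- by subst a; exact: H.
Qed.

Lemma sched_mono a x y : a < k -> I a <= x -> x <= y -> y < J a -> T a x <= T a y.
Proof.
move=> ak ix; elim: y => [|y IH] xy yJ; first by have -> : x = 0 by lia.
case: (ltngtP x y.+1) => [lt|gt|eq]; last by rewrite eq.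
- have := IH ltac:(lia) ltac:(lia); have := sched_incr ak (x:=y) ltac:(lia) yJ; lia.
- lia.
Qed.

(* The value of entry [a] after the first [t] letters of [w]. *)
Definition row_at t a := I a + \sum_(I a <= x < J a) (T a x < t).

Lemma row_at_ge t a : I a <= row_at t a.
Proof. by rewrite /row_at leq_addr. Qed.

Lemma row_at_le t a : a < k -> row_at t a <= J a.
Proof.
move=> ak; have : \sum_(I a <= x < J a) (T a x < t) <= J a - I a.
  apply: (@leq_trans (\sum_(I a <= x < J a) 1)).
    by apply: leq_sum => i _; case: (_ < _).
  by rewrite sum_nat_const_nat muln1.
have := le_IJ ak; rewrite /row_at; lia.
Qed.

Lemma row_at_gt t a x : a < k -> I a <= x -> x < J a -> T a x < t -> x < row_at t a.
Proof.
move=> ak ix xJ Tt; rewrite /row_at (big_cat_nat (n := x.+1)) //=; last by lia.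
apply: (@leq_trans (I a + \sum_(I a <= i < x.+1) 1)).
  by rewrite sum_nat_const_nat muln1; lia.
rewrite leq_add2l; apply: leq_trans _ (leq_addr _ _).
rewrite big_nat_cond [X in _ <= X]big_nat_cond.
apply: leq_sum => i /andP [/andP [h1 h2] _].
have := sched_mono ak h1 (x := i) (y := x) ltac:(lia) xJ.
by case: ltnP => //; lia.
Qed.

Lemma row_at_leq t a x : a < k -> I a <= x -> x < J a -> t <= T a x -> row_at t a <= x.
Proof.
move=> ak ix xJ tT; rewrite /row_at (big_cat_nat (n := x)) //=; last by lia.
have -> : \sum_(x <= i < J a) (T a i < t) = 0.
  rewrite big_nat_cond big1 // => i /andP [/andP [h1 h2] _].
  have := sched_mono ak ix (x := x) (y := i) h1 h2.
  by case: ltnP => //; lia.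
rewrite addn0; apply: (@leq_trans (I a + \sum_(I a <= i < x) 1)).
  by rewrite leq_add2l; apply: leq_sum => i _; case: (_ < _).
by rewrite sum_nat_const_nat muln1; lia.
Qed.

Lemma row_at_sched t a x : a < k -> I a <= x -> x < J a -> T a x = t ->
  row_at t a = x.
Proof.
move=> ak ix xJ Tt; apply/eqP; rewrite eqn_leq row_at_leq ?Tt //=.
case: (ltngtP (I a) x) => [lt|gt|eq]; last by rewrite -eq row_at_ge.
- have := row_at_gt ak (x := x.-1) (t := t) ltac:(lia) ltac:(lia).
  have := sched_incr ak (x := x.-1) ltac:(lia) ltac:(lia).
  have -> : x.-1.+1 = x by lia.
  by rewrite Tt; lia.
- lia.
Qed.

Lemma increasing_row_at t : increasing k (row_at t).
Proof.
apply: increasing_of_succ => a a1k.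
have ak : a < k by lia.
set y := row_at t a.
have Ia := incr_I (ltnSn a) a1k.
case: (ltngtP (I a) y) => [lt|gt|eq]; last first.
- by rewrite -eq; apply: leq_trans Ia (row_at_ge _ _).
- by have := row_at_ge t a; rewrite -/y; lia.
have yJ : y <= J a by exact: row_at_le.
have Tlt : T a y.-1 < t.
  rewrite ltnNge; apply/negP => h.
  have := row_at_leq ak (x := y.-1) ltac:(lia) ltac:(lia) h; rewrite -/y; lia.
case: (leqP (I a.+1) y) => h; last by apply: leq_trans h (row_at_ge _ _).
have JJ := incr_J (ltnSn a) a1k.
have := sched_stagger a1k (x := y.-1) ltac:(lia) ltac:(lia).
have -> : y.-1.+1 = y by lia.
move=> h3; have := row_at_gt a1k (x := y) (t := t) h ltac:(lia) ltac:(lia); lia.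
Qed.

Lemma row_at_stay t b : b < k -> (forall x, I b <= x -> x < J b -> T b x <> t) ->
  row_at t.+1 b = row_at t b.
Proof.
move=> bk H; rewrite /row_at; congr (_ + _).
rewrite big_nat_cond [RHS]big_nat_cond; apply: eq_bigr => i /andP [/andP [h1 h2] _].
by have := H i h1 h2; rewrite ltnS leq_eqVlt; case: eqP.
Qed.

Lemma row_at_step t : t < size w -> lifts k [:: nth 0 w t] (row_at t) (row_at t.+1).
Proof.
move=> tw.
case: (classic (exists a x, [/\ a < k, I a <= x, x < J a & T a x = t])) =>
  [[a [x [ak ix xJ Tt]]]|none]; last first.
  left => b bk; apply/esym/row_at_stay => // x ix xJ Tx.
  by apply: none; exists b, x.
have [_ nt] := sched_letter ak ix xJ; rewrite Tt in nt; rewrite nt.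
have pa := row_at_sched ak ix xJ Tt.
right; exists a; split => //.
- move=> a1k; have JJ := incr_J (ltnSn a) a1k.
  case: (leqP (I a.+1) x.+1) => h; last by have := row_at_ge t a.+1; lia.
  have := sched_stagger a1k ix xJ h; rewrite Tt => h3.
  have := row_at_gt a1k (x := x.+1) (t := t) h ltac:(lia) h3; lia.
move=> b bk /=; rewrite /upd; case: (eqVneq b a) => [->|ba].
  apply/eqP; rewrite eqn_leq; apply/andP; split.
    by apply: row_at_gt ak ix xJ _; rewrite Tt.
  case: (ltnP x.+1 (J a)) => h; last by apply: leq_trans (row_at_le _ ak) h.
  apply: (row_at_leq ak) => //; first lia.
  by have := sched_incr ak ix h; rewrite Tt.
apply/esym/row_at_stay => // x' ix' xJ' Tx'.
have [_ nt'] := sched_letter bk ix' xJ'; rewrite Tx' nt in nt'.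
case: nt' => ex; subst x'.
have := row_at_sched bk ix' xJ' Tx'; rewrite -pa => /esym.
by move/(increasing_inj (increasing_row_at t) ak bk) => e; rewrite e eqxx in ba.
Qed.

Lemma lifts_of_schedule : lifts k w I J.
Proof.
suff H : forall d t, t + d = size w -> lifts k (drop t w) (row_at t) J.
  have := H _ 0 (add0n _); rewrite drop0 => H0; apply: lifts_ext H0 _ _ => //.
  by move=> a ak; rewrite /row_at big_nat_cond big1 ?addn0.
elim=> [|d IH] t htd.
  rewrite addn0 in htd; rewrite htd drop_size => a ak.
  apply/eqP; rewrite eqn_leq row_at_le //=.
  case: (ltngtP (I a) (J a)) => [lt|gt|eq]; last by rewrite -eq row_at_ge.
  + have [hT _] := sched_letter ak (x := (J a).-1) ltac:(lia) ltac:(lia).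
    have := row_at_gt ak (x := (J a).-1) ltac:(lia) ltac:(lia) hT; lia.
  + by have := le_IJ ak; lia.
have tw : t < size w by lia.
rewrite (drop_nth 0 tw) -cat1s.
exact: lifts_cat (row_at_step tw) (IH t.+1 ltac:(lia)).
Qed.

End Schedule.

Lemma size_flatten_pairs (f g : nat -> nat) s :
  size (flatten [seq [:: f j; g j] | j <- s]) = 2 * size s.
Proof. elim: s => [|j s IH] //=; rewrite IH; lia. Qed.

Lemma nth_flatten_pairs_even (f g : nat -> nat) N st q : q < N ->
  nth 0 (flatten [seq [:: f j; g j] | j <- iota st N]) (2 * q) = f (st + q).
Proof.
elim: N st q => [|N IH] st q qN; first by [].
case: q qN => [|q] qN; first by rewrite /= addn0.
rewrite (_ : 2 * q.+1 = (2 * q).+2); last lia.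
set i := 2 * q; rewrite /= /i IH ?addSnnS //; lia.
Qed.

Lemma nth_flatten_pairs_odd (f g : nat -> nat) N st q : q < N ->
  nth 0 (flatten [seq [:: f j; g j] | j <- iota st N]) (2 * q).+1 = g (st + q).
Proof.
elim: N st q => [|N IH] st q qN; first by [].
case: q qN => [|q] qN; first by rewrite /= addn0.
rewrite (_ : 2 * q.+1 = (2 * q).+2); last lia.
set i := 2 * q; rewrite /= /i IH ?addSnnS //; lia.
Qed.

Lemma size_flatten_nseq N (b : seq nat) : size (flatten (nseq N b)) = N * size b.
Proof. elim: N => [|N IH] //=; rewrite size_cat IH; lia. Qed.

Lemma nth_flatten_nseq N (b : seq nat) r i : r < N -> i < size b ->
  nth 0 (flatten (nseq N b)) (r * size b + i) = nth 0 b i.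
Proof.
elim: N r => [|N IH] r //= rR ib.
rewrite nth_cat; case: r rR => [|r] rR; first by rewrite mul0n add0n ib.
rewrite mulSn -addnA (_ : size b + _ < size b = false); last lia.
by rewrite (_ : size b + (r * size b + i) - size b = r * size b + i) ?IH //; lia.
Qed.

Section SlBlock.
Variable n : nat.
Hypothesis hn : 1 <= n.

Lemma size_sl_block : size (sl_block n) = 4 * n - 1.
Proof. rewrite /sl_block !size_cat !size_flatten_pairs !size_iota /=; lia. Qed.

Lemma size_sl_word : size (sl_word n) = (2 * n - 1) * (4 * n - 1).
Proof. by rewrite /sl_word size_flatten_nseq size_sl_block. Qed.

Lemma sl_block_first_l q : q < n -> nth 0 (sl_block n) (2 * q) = (2 * q).+1.
Proof.
move=> qn; rewrite /sl_block nth_cat size_flatten_pairs size_iota.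
by rewrite (_ : 2 * q < 2 * n) ?nth_flatten_pairs_even //; lia.
Qed.

Lemma sl_block_first_r q : q < n -> nth 0 (sl_block n) (2 * q).+1 = 4 * n - 2 - 2 * q.
Proof.
move=> qn; rewrite /sl_block nth_cat size_flatten_pairs size_iota.
by rewrite (_ : (2 * q).+1 < 2 * n) ?nth_flatten_pairs_odd //; lia.
Qed.

Lemma sl_block_middle : nth 0 (sl_block n) (2 * n) = (2 * n).-1.
Proof.
by rewrite /sl_block nth_cat size_flatten_pairs size_iota ltnn subnn.
Qed.

Lemma sl_block_second_l q : q < n.-1 ->
  nth 0 (sl_block n) (2 * n + 1 + 2 * q) = (2 * q).+2.
Proof.
move=> qn; rewrite /sl_block nth_cat size_flatten_pairs size_iota.
rewrite (_ : 2 * n + 1 + 2 * q < 2 * n = false); last lia.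
rewrite (_ : 2 * n + 1 + 2 * q - 2 * n = (2 * q).+1) /=; last lia.
by rewrite nth_flatten_pairs_even.
Qed.

Lemma sl_block_second_r q : q < n.-1 ->
  nth 0 (sl_block n) (2 * n + 1 + (2 * q).+1) = 4 * n - 3 - 2 * q.
Proof.
move=> qn; rewrite /sl_block nth_cat size_flatten_pairs size_iota.
rewrite (_ : 2 * n + 1 + (2 * q).+1 < 2 * n = false); last lia.
rewrite (_ : 2 * n + 1 + (2 * q).+1 - 2 * n = (2 * q).+2) /=; last lia.
by rewrite nth_flatten_pairs_odd.
Qed.

Lemma nth_sl_word r i : r < 2 * n - 1 -> i < 4 * n - 1 ->
  nth 0 (sl_word n) (r * (4 * n - 1) + i) = nth 0 (sl_block n) i.
Proof.
by move=> rR iL; rewrite /sl_word -size_sl_block nth_flatten_nseq // size_sl_block.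
Qed.

End SlBlock.

Lemma ltn_round_offset q q' o o' L : (q < q' /\ o < L) \/ (q = q' /\ o < o') ->
  q * L + o < q' * L + o'.
Proof.
case=> [[qq oL]|[-> oo]]; last by rewrite ltn_add2l.
apply: (@leq_trans (q.+1 * L)); first by rewrite mulSn [L + _]addnC ltn_add2l.
apply: leq_trans (leq_addr _ _); exact: leq_mul.
Qed.

Section SlSchedule.
Variables n k : nat.
Hypothesis hn : 1 <= n.

(* A block of [sl_word n] has a first part, at offsets [0 .. 2n], reading
   [1, 4n-2, 3, 4n-4, ..., 2n-1, 2n, 2n-1], and a second part, at offsets
   [2n+1 .. 4n-2], reading [2, 4n-3, ..., 2n-2, 2n+1]; [half_block] numbers
   these parts consecutively.  Entry [a] moves from [x] to [x+1] in part
   [half_block a x], which is [x + k - 2a] up to the shift making that part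
   contain the letter [x+1], at the offset [offset a x] of this letter.  When
   [wide], the letter [2n-1] is taken at the end of the first part. *)
Definition wide := 2 * n <= k.
Definition shift := if wide then k %% 2 else (k - 1) %% 2.
Definition diag a x := x + (shift + k - 1) - 2 * a.
Definition half_block a x :=
  if x <= 2 * n - 2 then (if wide then (diag a x).-1 else diag a x)
  else (if wide then diag a x else (diag a x).-1).
Definition offset a x :=
  if half_block a x %% 2 == 1 then (if x <= 2 * n - 2 then 2 * n + x else 6 * n - 2 - x)
  else (if x <= 2 * n - 2 then (if wide && (x == 2 * n - 2) then 2 * n else x)
        else 4 * n - 2 - x).
Definition sched a x := half_block a x %/ 2 * (4 * n - 1) + offset a x.

Definition in_range a x := [/\ a < k, a <= x & x < 4 * n - 1 - k + a].

Lemma diag_succ a x : in_range a x -> diag a x.+1 = (diag a x).+1.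
Proof. case=> ak ax xJ; rewrite /diag; lia. Qed.

Lemma diag_next_row a x : in_range a x -> a.+1 < k ->
  diag a.+1 x.+1 = (diag a x).-1 /\ 1 <= diag a x.
Proof. case=> ak ax xJ a1k; rewrite /diag; lia. Qed.

Lemma diag_parity a x : in_range a x ->
  (wide -> diag a x %% 2 = (x + 1) %% 2) /\ (~~ wide -> diag a x %% 2 = x %% 2).
Proof.
case=> ak ax xJ; rewrite /diag /shift; split => hb; rewrite ?hb ?(negbTE hb); lia.
Qed.

Lemma diag_range a x : in_range a x ->
  (~~ wide -> diag a x = 0 -> x <= 2 * n - 2) /\
  (wide -> diag a x = 0 -> 2 * n - 2 < x) /\
  (~~ wide -> diag a x = 4 * n - 2 -> 2 * n - 2 < x) /\
  (wide -> diag a x = 4 * n - 2 -> x <= 2 * n - 2) /\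
  diag a x <= 4 * n - 2.
Proof.
case=> ak ax xJ; rewrite /diag /shift /wide.
case: (leqP (2 * n) k) => hb /=; lia.
Qed.

Lemma half_block_cases a x :
  [\/ [/\ x <= 2 * n - 2, ~~ wide & half_block a x = diag a x],
      [/\ x <= 2 * n - 2, wide & half_block a x = (diag a x).-1],
      [/\ 2 * n - 2 < x, wide & half_block a x = diag a x] |
      [/\ 2 * n - 2 < x, ~~ wide & half_block a x = (diag a x).-1]].
Proof.
rewrite /half_block; case: (leqP x (2 * n - 2)) => h; case: (boolP wide) => hb.
- by apply: Or42.
- by apply: Or41.
- by apply: Or43.
- by apply: Or44.
Qed.

Lemma half_block_parity a x : in_range a x ->
  (x <= 2 * n - 2 -> half_block a x %% 2 = x %% 2) /\
  (2 * n - 2 < x -> half_block a x %% 2 = (x + 1) %% 2) /\ half_block a x <= 4 * n - 3.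
Proof.
move=> v; have [p1 p2] := diag_parity v.
have [r1 [r2 [r3 [r4 r5]]]] := diag_range v.
case: (half_block_cases a x) => [[h hb ->]|[h hb ->]|[h hb ->]|[h hb ->]].
- have := p2 hb; have := r1 hb; have := r3 hb; lia.
- have := p1 hb; have := r2 hb; have := r4 hb; lia.
- have := p1 hb; have := r2 hb; have := r4 hb; lia.
- have := p2 hb; have := r1 hb; have := r3 hb; lia.
Qed.

Lemma offset_range a x : in_range a x ->
  (half_block a x %% 2 = 0 -> offset a x <= 2 * n) /\
  (half_block a x %% 2 = 1 -> 2 * n + 1 <= offset a x /\ offset a x <= 4 * n - 2).
Proof.
move=> v; have [t1 [t2 t3]] := half_block_parity v; have [ak ax xJ] := v.
rewrite /offset; split => h3.
  rewrite h3 /=; case: (leqP x (2 * n - 2)) => h2; last lia.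
  case: (_ && _); lia.
rewrite h3 eqxx; case: (leqP x (2 * n - 2)) => h2.
  have := t1 h2; lia.
have := t2 h2; lia.
Qed.

Lemma sched_lt a x a' x' : in_range a x -> in_range a' x' ->
  (half_block a x < half_block a' x' \/
   half_block a x = half_block a' x' /\ offset a x < offset a' x') ->
  sched a x < sched a' x'.
Proof.
move=> v v' H; have [o1 o2] := offset_range v; have [o1' o2'] := offset_range v'.
rewrite /sched; apply: ltn_round_offset.
set t := half_block a x in H o1 o2 *; set t' := half_block a' x' in H o1' o2' *.
set o := offset a x in H o1 o2 *; set o' := offset a' x' in H o1' o2' *.
case: H => [lt|[eq lt]]; last by right; split => //; rewrite eq.
have [to|te] : t %% 2 = 1 \/ t %% 2 = 0 by lia.
- have := o2 to; lia.
- have := o1 te.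
  have [to'|te'] : t' %% 2 = 1 \/ t' %% 2 = 0 by lia.
  + have := o2' to'; lia.
  + lia.
Qed.

Lemma offset_even_left a x : half_block a x %% 2 = 0 -> x <= 2 * n - 2 ->
  ~~ (wide && (x == 2 * n - 2)) -> offset a x = x.
Proof. by move=> h1 h2 h3; rewrite /offset h1 /= h2 (negbTE h3). Qed.

Lemma offset_even_middle a x : half_block a x %% 2 = 0 -> wide -> x = 2 * n - 2 ->
  offset a x = 2 * n.
Proof. by move=> h1 h2 h3; rewrite /offset h1 /= h3 leqnn h2 eqxx. Qed.

Lemma offset_even_right a x : half_block a x %% 2 = 0 -> 2 * n - 2 < x ->
  offset a x = 4 * n - 2 - x.
Proof. by move=> h1 h2; rewrite /offset h1 /= leqNgt h2. Qed.

Lemma offset_odd_left a x : half_block a x %% 2 = 1 -> x <= 2 * n - 2 ->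
  offset a x = 2 * n + x.
Proof. by move=> h1 h2; rewrite /offset h1 /= h2. Qed.

Lemma offset_odd_right a x : half_block a x %% 2 = 1 -> 2 * n - 2 < x ->
  offset a x = 6 * n - 2 - x.
Proof. by move=> h1 h2; rewrite /offset h1 /= leqNgt h2. Qed.

Lemma half_block_narrow a x : ~~ wide ->
  half_block a x = (if x <= 2 * n - 2 then diag a x else (diag a x).-1).
Proof. by move=> hb; rewrite /half_block (negbTE hb); case: ifP. Qed.

Lemma half_block_wide a x : wide ->
  half_block a x = (if x <= 2 * n - 2 then (diag a x).-1 else diag a x).
Proof. by move=> hb; rewrite /half_block hb; case: ifP. Qed.

Lemma sched_incr_ok a x : in_range a x -> x.+1 < 4 * n - 1 - k + a ->
  sched a x < sched a x.+1.
Proof.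
move=> v xJ; have v' : in_range a x.+1 by case: v => ak ax _; split => //; lia.
apply: (sched_lt v v').
have es := diag_succ v.
have [p1 [p2 _]] := half_block_parity v.
have [p1' [p2' _]] := half_block_parity v'.
have [r1 [r2 [r3 [r4 r5]]]] := diag_range v.
case: (boolP wide) => hb.
- rewrite !half_block_wide // es; move: (r2 hb) => {r1 r2 r3 r4 r5} r.
  case: ifP => h; case: ifP => h'; left; lia.
- rewrite !half_block_narrow // es; move: (r1 hb) => {r1 r2 r3 r4 r5} r.
  case: ifP => h; case: ifP => h'; try (left; lia).
  right; split; first lia.
  have ex : x = 2 * n - 2 by lia.
  have tx : half_block a x %% 2 = 0 by rewrite p1 // ex; lia.
  have tx' : half_block a x.+1 %% 2 = 0 by rewrite p2' ?ex; lia.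
  rewrite offset_even_left // ?offset_even_right //; first lia.
  - lia.
  - by rewrite (negbTE hb).
Qed.

Lemma sched_stagger_ok a x : in_range a x -> a.+1 < k -> sched a.+1 x.+1 < sched a x.
Proof.
move=> v a1k; have v' : in_range a.+1 x.+1 by case: v => ak ax xJ; split => //; lia.
apply: (sched_lt v' v).
have [en e1] := diag_next_row v a1k.
have [p1 [p2 _]] := half_block_parity v.
have [p1' [p2' _]] := half_block_parity v'.
have [r1 [r2 [r3 [r4 r5]]]] := diag_range v'.
rewrite en in r1 r2 r3 r4 r5.
case: (boolP wide) => hb.
- rewrite !half_block_wide // en; move: (r2 hb) => {r1 r2 r3 r4 r5} r.
  case: ifP => h'; case: ifP => h; try (left; lia).
  right; split; first lia.
  have ex : x = 2 * n - 2 by lia.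
  have tx : half_block a x %% 2 = 0 by rewrite p1 // ex; lia.
  have tx' : half_block a.+1 x.+1 %% 2 = 0 by rewrite p2' ?ex; lia.
  rewrite (offset_even_right tx'); last lia.
  rewrite (offset_even_middle tx hb ex); lia.
- rewrite !half_block_narrow // en; move: (r1 hb) => {r1 r2 r3 r4 r5} r.
  case: ifP => h'; case: ifP => h; left; lia.
Qed.

Lemma sched_letter_ok a x : in_range a x ->
  sched a x < size (sl_word n) /\ nth 0 (sl_word n) (sched a x) = x.+1.
Proof.
move=> v; have [t1 [t2 t3]] := half_block_parity v; have [o1 o2] := offset_range v.
have [ak ax xJ] := v.
have oL : offset a x < 4 * n - 1.
  have [h|h] : half_block a x %% 2 = 0 \/ half_block a x %% 2 = 1 by lia.
  - have := o1 h; lia.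
  - have := o2 h; lia.
rewrite size_sl_word //; split.
  rewrite /sched -[X in _ < X]addn0; apply: ltn_round_offset; left; split => //.
  have := leq_div2r 2 t3; rewrite (_ : (4 * n - 3) %/ 2 = 2 * n - 2); lia.
rewrite /sched nth_sl_word //; last first.
  have := leq_div2r 2 t3; rewrite (_ : (4 * n - 3) %/ 2 = 2 * n - 2); lia.
have [h|h] : half_block a x %% 2 = 0 \/ half_block a x %% 2 = 1 by lia.
- case: (leqP x (2 * n - 2)) => hx.
  + case: (boolP (wide && (x == 2 * n - 2))) => hd.
      have [hb /eqP ex] := andP hd.
      rewrite (offset_even_middle h hb ex) sl_block_middle; lia.
    rewrite (offset_even_left h hx hd).
    have [q hq] : exists q, x = 2 * q by exists (x %/ 2); have := t1 hx; lia.
    by rewrite hq sl_block_first_l //; lia.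
  + rewrite (offset_even_right h hx).
    have [q hq] : exists q, x = (2 * q).+1 by exists (x %/ 2); have := t2 hx; lia.
    rewrite (_ : 4 * n - 2 - x = (2 * (2 * n - 2 - q)).+1); last lia.
    rewrite sl_block_first_r; lia.
- case: (leqP x (2 * n - 2)) => hx.
  + rewrite (offset_odd_left h hx).
    have [q hq] : exists q, x = (2 * q).+1 by exists (x %/ 2); have := t1 hx; lia.
    rewrite (_ : 2 * n + x = 2 * n + 1 + 2 * q); last lia.
    rewrite sl_block_second_l; lia.
  + rewrite (offset_odd_right h hx).
    have [q hq] : exists q, x = 2 * q by exists (x %/ 2); have := t2 hx; lia.
    rewrite (_ : 6 * n - 2 - x = 2 * n + 1 + (2 * (2 * n - 2 - q)).+1); last lia.
    rewrite sl_block_second_r; lia.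
Qed.

Lemma lifts_sl_word_extreme :
  lifts k (sl_word n) (fun a => a) (fun a => 4 * n - 1 - k + a).
Proof.
apply: (@lifts_of_schedule k (sl_word n) _ _ sched).
- by move=> a b ab bk.
- move=> a b ab bk; lia.
- move=> a ak; lia.
- move=> a x ak ax xJ; apply: sched_letter_ok; split => //.
- move=> a x ak ax xJ; apply: sched_incr_ok; first split => //; lia.
- move=> a x a1k ax xJ _; apply: sched_stagger_ok => //; split => //; lia.
Qed.

End SlSchedule.

Lemma lifts_sl_word n k p q : 1 <= n -> increasing k p -> increasing k q ->
  tuple_le k p q -> (forall a, a < k -> q a < 4 * n - 1) -> lifts k (sl_word n) p q.
Proof.
move=> hn ip iq lpq bq.
case: k ip iq lpq bq => [|k] ip iq lpq bq.
  by elim: (sl_word n) => [|j w IH] //=; left.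
have hk : k.+1 <= 4 * n - 1.
  by have := increasing_ge_index iq (ltnSn k); have := bq k (ltnSn k); lia.
apply: (lifts_of_extreme (m := 4 * n - 1)) => //.
exact: lifts_sl_word_extreme.
Qed.

Lemma all_flatten_pairs (P : pred nat) (f g : nat -> nat) s :
  (forall k, k \in s -> P (f k) && P (g k)) ->
  all P (flatten [seq [:: f k; g k] | k <- s]).
Proof.
elim: s => [|k s IH] //= H.
have /andP [h1 h2] := H k (mem_head _ _).
by rewrite h1 h2 /= IH // => j js; apply: H; rewrite in_cons js orbT.
Qed.

Lemma all_flatten_nseq (P : pred nat) N b : all P b -> all P (flatten (nseq N b)).
Proof. by move=> h; elim: N => [|N IH] //=; rewrite all_cat h IH. Qed.

Lemma flatten_map_nseq (f : nat -> seq nat) N b :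
  flatten (map f (flatten (nseq N b))) = flatten (nseq N (flatten (map f b))).
Proof. by elim: N => [|N IH] //=; rewrite map_cat flatten_cat IH. Qed.

Section Words.
Variable n : nat.
Hypothesis hn : 1 <= n.

Lemma sl_word_letters : all (fun j => 0 < j < 4 * n - 1) (sl_word n).
Proof.
apply: all_flatten_nseq; rewrite /sl_block !all_cat; apply/and3P; split.
- apply: all_flatten_pairs => k; rewrite mem_iota => /andP [_ kn].
  by apply/andP; split; apply/andP; split; lia.
- by rewrite /= andbT; apply/andP; split; lia.
- apply: all_flatten_pairs => k; rewrite mem_iota => /andP [_ kn].
  by apply/andP; split; apply/andP; split; lia.
Qed.

Lemma so_word_letters : all (fun i => 0 < i <= 2 * n - 1) (so_word n).
Proof.
apply: all_flatten_nseq; rewrite /so_block all_cat; apply/andP; split;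
  apply/allP => x /mapP [k]; rewrite mem_iota => /andP [_ kn] ->; apply/andP; split; lia.
Qed.

(* The letters of [sl_word n] spelling one [e^{t X_i}]. *)
Definition sl_of (i : nat) : seq nat :=
  if i == 2 * n - 1 then [:: 2 * n - 1; 2 * n; 2 * n - 1] else [:: i; 4 * n - 1 - i].

Lemma sl_word_of_so_word : flatten (map sl_of (so_word n)) = sl_word n.
Proof.
rewrite /so_word /sl_word flatten_map_nseq; congr (flatten (nseq _ _)).
rewrite /so_block /sl_block map_cat flatten_cat.
have iotan : iota 0 n = iota 0 n.-1 ++ [:: n.-1].
  by rewrite -[in LHS](prednK hn) -addn1 iotaD.
have first_pairs : flatten [seq sl_of i | i <- [seq (2 * k).+1 | k <- iota 0 n.-1]] =
          flatten [seq [:: (2 * k).+1; 4 * n - 2 - 2 * k] | k <- iota 0 n.-1].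
  rewrite -map_comp; congr (flatten _).
  apply/eq_in_map => k; rewrite mem_iota => /andP [_ kn].
  rewrite /= /sl_of ifF; last by apply/eqP; lia.
  congr [:: _; _]; lia.
have last_first : sl_of (2 * n.-1).+1 =
          [:: (2 * n.-1).+1; 4 * n - 2 - 2 * n.-1] ++ [:: (2 * n).-1].
  rewrite /sl_of ifT; last by apply/eqP; lia.
  rewrite /=; congr [:: _, _ & _]; try lia; congr [:: _]; lia.
have second_pairs : flatten [seq sl_of i | i <- [seq (2 * k).+2 | k <- iota 0 n.-1]] =
          flatten [seq [:: (2 * k).+2; 4 * n - 3 - 2 * k] | k <- iota 0 n.-1].
  rewrite -map_comp; congr (flatten _).
  apply/eq_in_map => k; rewrite mem_iota => /andP [_ kn].
  rewrite /= /sl_of ifF; last by apply/eqP; lia.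
  congr [:: _; _]; lia.
rewrite second_pairs iotan !map_cat !flatten_cat first_pairs /= cats0 last_first.
by rewrite !catA -!catA.
Qed.

End Words.

Local Open Scope ring_scope.

Section ElementaryProducts.
Variable R : realType.
Variable m : nat.
Variable i0 : 'I_m.

Definition ord_of (x : nat) : 'I_m := insubd i0 x.

Lemma val_ord_of x : (x < m)%N -> val (ord_of x) = x.
Proof. by move=> xm; rewrite /ord_of val_insubd xm. Qed.

Lemma E_mul i j k l : (j.-1 < m)%N ->
  E R m i j *m E R m k l = if j.-1 == k.-1 then E R m i l else 0.
Proof.
move=> jm; apply/matrixP => r c; rewrite !mxE.
rewrite (bigD1 (ord_of j.-1)) //= big1 ?addr0.
  rewrite !mxE val_ord_of // eqxx andbT.
  case: (boolP (j.-1 == k.-1)) => h /=; rewrite !mxE ?andFb ?mulr0 //=.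
  by rewrite -natrM mulnb.
move=> s ns; rewrite !mxE.
case: (eqVneq (val s) j.-1) => [es|]; last by rewrite andbF mul0r.
by case/eqP: ns; apply: val_inj; rewrite val_ord_of.
Qed.

Definition elemx j (u : R) : 'M[R]_m := 1%:M + u *: E R m j j.+1.

Definition elem_prod (w : seq nat) (us : seq R) : 'M[R]_m :=
  foldr (fun pr M => elemx pr.1 pr.2 *m M) 1%:M (zip w us).

Lemma mul_elemx_entry (M : 'M[R]_m) j u r c : (0 < j)%N -> (j < m)%N ->
  (elemx j u *m M) r c =
  M r c + (if val r == j.-1 then u * M (ord_of j) c else 0).
Proof.
move=> j0 jm; rewrite mulmxDl mul1mx -scalemxAl mxE [in X in _ + X]mxE.
congr (_ + _); rewrite mxE (bigD1 (ord_of j)) //= big1 ?addr0.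
  rewrite !mxE val_ord_of // eqxx andbT /=.
  by case: (val r == j.-1); rewrite ?mul1r ?mul0r ?mulr0.
move=> s ns; rewrite !mxE /=.
case: (eqVneq (val s) j) => [es|]; last by rewrite andbF mul0r.
by case/eqP: ns; apply: val_inj; rewrite val_ord_of.
Qed.

Lemma elem_prod_upper w us : all (fun j => (0 < j < m)%N) w ->
  size us = size w -> forall r c : 'I_m, (c < r)%N -> elem_prod w us r c = 0.
Proof.
elim: w us => [|j w IH] [|u us] //= hw hs r c cr.
  by rewrite mxE; case: eqP => // e; rewrite e ltnn in cr.
case/andP: hw => /andP [j0 jm] hw.
rewrite mul_elemx_entry // IH // ?add0r ?(eq_add_S _ _ hs) //.
case: eqP => // rj; rewrite IH ?mulr0 // ?(eq_add_S _ _ hs) //.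
by move: rj => /= rj; rewrite /= val_ord_of //; lia.
Qed.

Fact submx_key : unit. Proof. exact: tt. Qed.
Definition submx_at k (M : 'M[R]_m) (p q : nat -> nat) : 'M[R]_k :=
  locked_with submx_key
    (\matrix_(a < k, b < k) M (ord_of (p a)) (ord_of (q b))).
Definition minor k (M : 'M[R]_m) (p q : nat -> nat) : R := \det (submx_at k M p q).

Lemma submx_atE k M p q (a b : 'I_k) :
  submx_at k M p q a b = M (ord_of (p a)) (ord_of (q b)).
Proof. by rewrite /submx_at unlock mxE. Qed.

Definition bounded k (p : nat -> nat) := forall a, (a < k)%N -> (p a < m)%N.

Lemma bounded_upd k p a j : bounded k p -> (j < m)%N -> bounded k (upd p a j).
Proof. by move=> bp jm b bk; rewrite /upd; case: eqP => // _; exact: bp. Qed.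

Section Minors.
Variable k : nat.
Implicit Types (p q : nat -> nat) (M : 'M[R]_m).

(* Row [a0] of the submatrix becomes row [j.-1] of [M] plus [u] times row
   [j]; no other selected row is affected since [p] is injective. *)
Lemma minor_elemx_lift M j u p q a0 : (0 < j)%N -> (j < m)%N ->
  increasing k p -> bounded k p -> (a0 < k)%N -> p a0 = j.-1 ->
  minor k (elemx j u *m M) p q = minor k M p q + u * minor k M (upd p a0 j) q.
Proof.
move=> j0 jm ip bp a0k pa0.
have other : forall r : 'I_k.-1, val (ord_of (p (lift (Ordinal a0k) r))) != j.-1.
  move=> r; rewrite val_ord_of ?bp // -pa0; apply/eqP.
  move/(increasing_inj ip (ltn_ord _) a0k) => e.
  by case/eqP: (neq_lift (Ordinal a0k) r); apply: val_inj; exact: esym e.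
rewrite -[minor k M p q]mul1r.
apply: (determinant_multilinear (i0 := Ordinal a0k)).
- apply/rowP => b; rewrite !mxE !submx_atE mul_elemx_entry //.
  by rewrite val_ord_of ?bp // pa0 eqxx /upd eqxx mul1r.
- apply/matrixP => r c.
  by rewrite !mxE !submx_atE mul_elemx_entry // (negbTE (other r)) addr0.
- apply/matrixP => r c; rewrite !mxE !submx_atE mul_elemx_entry //.
  have ne : val (lift (Ordinal a0k) r) != a0.
    by have := neq_lift (Ordinal a0k) r; rewrite eq_sym -val_eqE.
  by rewrite /upd (negbTE ne) (negbTE (other r)) addr0.
Qed.

Lemma minor_elemx_fixed M j u p q : (0 < j)%N -> (j < m)%N -> bounded k p ->
  (forall a, (a < k)%N -> p a != j.-1) -> minor k (elemx j u *m M) p q = minor k M p q.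
Proof.
move=> j0 jm bp h; rewrite /minor; congr (\det _); apply/matrixP => r c.
rewrite !submx_atE mul_elemx_entry // val_ord_of ?bp //.
by rewrite (negbTE (h _ (ltn_ord r))) addr0.
Qed.

Lemma minor_eq_rows M p q a0 : (a0.+1 < k)%N -> p a0 = p a0.+1 -> minor k M p q = 0.
Proof.
move=> a1k e; have a0k : (a0 < k)%N by apply: ltnW.
apply: (determinant_alternate (i1 := Ordinal a0k) (i2 := Ordinal a1k)).
  by rewrite -val_eqE /= eqn_leq ltnn andbF.
by move=> c; rewrite !submx_atE /= e.
Qed.

Lemma det_zero_row (A : 'M[R]_k) (i : 'I_k) : (forall j, A i j = 0) -> \det A = 0.
Proof. by move=> h; rewrite (expand_det_row A i) big1 // => j _; rewrite h mul0r. Qed.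

Lemma minor1_diag p q : bounded k p -> increasing k p -> tuple_eq k p q ->
  minor k 1%:M p q = 1.
Proof.
move=> bp ip e; rewrite /minor (_ : submx_at k 1%:M p q = 1%:M) ?det1 //.
apply/matrixP => a b; rewrite submx_atE !mxE; congr (_%:R).
rewrite -val_eqE /= -(e b (ltn_ord b)) !val_ord_of ?bp //.
case: (eqVneq a b) => [->|nab]; first by rewrite !eqxx.
have : p a != p b.
  by apply: contra nab => /eqP /(increasing_inj ip (ltn_ord _) (ltn_ord _)) /val_inj ->.
by move/negbTE ->.
Qed.

Lemma minor1_row_missing p q a0 : (a0 < k)%N -> bounded k p -> bounded k q ->
  (forall b, (b < k)%N -> q b != p a0) -> minor k 1%:M p q = 0.
Proof.
move=> a0k bp bq h; rewrite /minor (det_zero_row (i := Ordinal a0k)) // => b.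
rewrite submx_atE !mxE -val_eqE /= !val_ord_of ?bp ?bq //.
by rewrite eq_sym (negbTE (h _ (ltn_ord b))).
Qed.

Lemma minor_tr M p q : minor k M^T q p = minor k M p q.
Proof.
rewrite /minor -det_tr; congr (\det _); apply/matrixP => a b.
by rewrite !mxE !submx_atE mxE.
Qed.

(* Compare [p] and [q] at their first difference [a0]: the smaller of the
   two values occurs nowhere in the other tuple. *)
Lemma minor1_ge0 p q : bounded k p -> bounded k q -> increasing k p ->
  increasing k q -> 0 <= minor k 1%:M p q.
Proof.
move=> bp bq ip iq.
case: (boolP [exists a : 'I_k, p a != q a]) => [ex|]; last first.
  rewrite negb_exists => /forallP h.
  rewrite minor1_diag // ?ler01 // => a ak.
  by have := h (Ordinal ak); rewrite negbK => /eqP.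
have exn : exists a, (a < k)%N && (p a != q a).
  by case/existsP: ex => a h; exists a; rewrite ltn_ord.
case: (ex_minnP exn) => a0 /andP [a0k ne] mn.
have same : forall b, (b < a0)%N -> p b = q b.
  move=> b ba; apply/eqP; case: (boolP (p b == q b)) => // nb.
  by have := mn b; rewrite nb andbT (ltn_trans ba a0k) => /(_ isT); lia.
have missing : forall p' q', increasing k p' -> increasing k q' ->
    (forall b, (b < a0)%N -> p' b = q' b) -> (p' a0 < q' a0)%N ->
    forall b, (b < k)%N -> q' b != p' a0.
  move=> p' q' ip' iq' sm lt b bk; apply/eqP => e.
  case: (ltnP b a0) => ba; first by have := ip' _ _ ba a0k; rewrite sm //; lia.
  case: (ltnP a0 b) => [ab|ba']; first by have := iq' _ _ ab bk; lia.
  have eb : b = a0 by apply/eqP; rewrite eqn_leq ba ba'.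
  by rewrite eb in e; lia.
case: (ltngtP (p a0) (q a0)) => [lt|gt|eq]; last by rewrite eq eqxx in ne.
- by rewrite (minor1_row_missing a0k bp bq (missing _ _ ip iq same lt)).
- rewrite -minor_tr trmx1 (minor1_row_missing a0k bq bp) //.
  by apply: missing => // b ba; rewrite same.
Qed.

Lemma minor_upd_ge0 M p q a0 j :
  (forall p', increasing k p' -> bounded k p' -> 0 <= minor k M p' q) ->
  increasing k p -> bounded k p -> (a0 < k)%N -> p a0 = j.-1 -> (0 < j)%N ->
  (j < m)%N -> 0 <= minor k M (upd p a0 j) q.
Proof.
move=> H ip bp a0k pa j0 jm.
case: (boolP ((a0.+1 < k)%N && (p a0.+1 == j))) => [/andP [a1k /eqP pj]|h].
  rewrite (@minor_eq_rows M (upd p a0 j) q a0 a1k) //.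
  by rewrite /upd eqxx (_ : a0.+1 == a0 = false) //; apply/eqP; lia.
apply: H; last exact: bounded_upd.
by apply: increasing_upd => // a1k ej; move: h; rewrite a1k ej eqxx.
Qed.

Lemma minor_elem_prod_ge0 w us : all (fun j => (0 < j < m)%N) w ->
  all (fun u => 0 < u) us -> size us = size w ->
  forall p q, increasing k p -> increasing k q -> bounded k p -> bounded k q ->
  0 <= minor k (elem_prod w us) p q.
Proof.
elim: w us => [|j w IH] [|u us] //= hw hu hs p q ip iq bp bq.
  exact: minor1_ge0.
case/andP: hw => /andP [j0 jm] hw; case/andP: hu => u0 hu.
have IH' := IH us hw hu (eq_add_S _ _ hs).
case: (classic (exists a0, (a0 < k)%N /\ p a0 = j.-1)) => [[a0 [a0k pa]]|none].
  rewrite (minor_elemx_lift _ _ _ j0 jm ip bp a0k pa).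
  apply: addr_ge0; first exact: IH'.
  apply: mulr_ge0; first exact: ltW.
  by apply: minor_upd_ge0 => // p' ip' bp'; exact: IH'.
rewrite minor_elemx_fixed //; first exact: IH'.
by move=> a ak; apply/eqP => e; apply: none; exists a.
Qed.

Lemma minor_elem_prod_gt0 w us : all (fun j => (0 < j < m)%N) w ->
  all (fun u => 0 < u) us -> size us = size w ->
  forall p q, increasing k p -> increasing k q -> bounded k p -> bounded k q ->
  lifts k w p q -> 0 < minor k (elem_prod w us) p q.
Proof.
elim: w us => [|j w IH] [|u us] //= hw hu hs p q ip iq bp bq.
  by move=> e; rewrite minor1_diag // ltr01.
case/andP: hw => /andP [j0 jm] hw; case/andP: hu => u0 hu.
have hs' := eq_add_S _ _ hs.
have IH' := IH us hw hu hs'.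
have TN := minor_elem_prod_ge0 hw hu hs'.
case=> [Hr|[a0 [a0k _ pa pf Hr]]].
  case: (classic (exists a0, (a0 < k)%N /\ p a0 = j.-1)) => [[a0 [a0k pa]]|none].
    rewrite (minor_elemx_lift _ _ _ j0 jm ip bp a0k pa).
    apply: ltr_wpDr; last exact: IH'.
    apply: mulr_ge0; first exact: ltW.
    by apply: minor_upd_ge0 => // p' ip' bp'; exact: TN.
  rewrite minor_elemx_fixed //; first exact: IH'.
  by move=> a ak; apply/eqP => e; apply: none; exists a.
rewrite (minor_elemx_lift _ _ _ j0 jm ip bp a0k pa).
apply: ltr_wpDl; first exact: TN.
apply: mulr_gt0 => //; apply: IH' => //; last exact: bounded_upd.
exact: increasing_upd.
Qed.

End Minors.
End ElementaryProducts.

Arguments elemx {R m} j u.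
Arguments elem_prod {R m} w us.

Section Exponentials.
Variable R : realType.
Variable m : nat.
Hypothesis m_gt2 : (2 < m)%N.
Implicit Types A B : 'M[R]_m.

Lemma mxpowS A k : mxpow A k.+1 = A *m mxpow A k. Proof. by []. Qed.

Lemma expm_cube_free A : (forall k, (3 <= k)%N -> mxpow A k = 0) ->
  expm A = 1%:M + A + 2%:R^-1 *: (A *m A).
Proof.
move=> h; rewrite /expm -(big_mkord xpredT (fun k => (k`!%:R)^-1 *: mxpow A k)).
rewrite big_ltn ?(ltn_trans _ m_gt2) // big_ltn ?(ltn_trans _ m_gt2) //.
rewrite big_ltn // big_nat_cond big1 ?addr0.
  by rewrite /mxpow /= !mulmx1 invr1 !scale1r addrA.
by move=> i /andP [/andP [hi _] _]; rewrite h // scaler0.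
Qed.

Lemma expm_sq0 A : A *m A = 0 -> expm A = 1%:M + A.
Proof.
move=> h; rewrite expm_cube_free; first by rewrite h scaler0 addr0.
by case=> [|[|[|k]]] // _; rewrite !mxpowS mulmxA h mul0mx.
Qed.

Lemma expm_cube0 A : A *m (A *m A) = 0 -> expm A = 1%:M + A + 2%:R^-1 *: (A *m A).
Proof.
move=> h; apply: expm_cube_free; case=> [|[|[|k]]] // _.
by rewrite !mxpowS !mulmxA -(mulmxA A A A) h mul0mx.
Qed.

Lemma scalemxM A B (t s : R) : (t *: A) *m (s *: B) = (t * s) *: (A *m B).
Proof. by rewrite -scalemxAl -scalemxAr scalerA. Qed.

Lemma expm_add_sq0 A B t : A *m A = 0 -> B *m B = 0 -> A *m B = 0 -> B *m A = 0 ->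
  expm (t *: (A + B)) = expm (t *: A) *m expm (t *: B).
Proof.
move=> AA BB AB BA.
rewrite !expm_sq0 ?scalemxM ?AA ?BB ?scaler0 //; last first.
  by rewrite mulmxDl !mulmxDr AA AB BA BB !addr0 scaler0.
rewrite mulmxDl mul1mx mulmxDr mulmx1 scalemxM AB scaler0 addr0.
by apply/matrixP => i j; rewrite !mxE; ring.
Qed.

(* A Strang-type splitting, exact here because [(A + B)^2 = A B] and all
   longer products vanish. *)
Lemma expm_add_split A B t : A *m A = 0 -> B *m B = 0 -> B *m A = 0 ->
  expm (t *: (A + B)) =
  expm ((t / 2%:R) *: A) *m expm (t *: B) *m expm ((t / 2%:R) *: A).
Proof.
move=> AA BB BA.
have XX : (A + B) *m (A + B) = A *m B.
  by rewrite mulmxDl !mulmxDr AA BA BB add0r !addr0.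
rewrite expm_cube0; last first.
  by rewrite !scalemxM XX mulmxDl !mulmxA AA BA !mul0mx addr0 scaler0.
rewrite !expm_sq0 ?scalemxM ?AA ?BB ?scaler0 //.
rewrite !(mulmxDl, mulmxDr, mul1mx, mulmx1, scalemxM).
rewrite ?mulmxA ?BA ?AA ?BB ?mul0mx ?mulmx0 ?scaler0 ?addr0 ?add0r.
rewrite -[A *m B *m A]mulmxA BA mulmx0 scaler0 addr0.
by apply/matrixP => i j; rewrite !mxE; field; rewrite ?pnatr_eq0 ?oner_eq0.
Qed.

End Exponentials.

Lemma upper_TP_elem_prod (R : realType) m (i0 : 'I_m) w (us : seq R) :
  all (fun j => (0 < j < m)%N) w -> all (fun u => 0 < u) us -> size us = size w ->
  (forall k p q, increasing k p -> increasing k q -> tuple_le k p q ->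
     (forall a, (a < k)%N -> (q a < m)%N) -> lifts k w p q) ->
  upper_TP (elem_prod (m := m) w us).
Proof.
move=> hw hu hs hlifts; split; first exact: (elem_prod_upper i0 hw hs).
move=> k I J hI hJ hIJ.
case: k I J hI hJ hIJ => [|k] I J hI hJ hIJ; first by rewrite det_mx00 ltr01.
pose p a := nat_of_ord (I (inord a)).
pose q a := nat_of_ord (J (inord a)).
have pE (a : 'I_k.+1) : p a = I a by rewrite /p inord_val.
have qE (a : 'I_k.+1) : q a = J a by rewrite /q inord_val.
have ip : increasing k.+1 p.
  move=> a b ab bk; have ak := ltn_trans ab bk.
  have := hI (Ordinal ak) (Ordinal bk) ab.
  by rewrite -(pE (Ordinal ak)) -(pE (Ordinal bk)).
have iq : increasing k.+1 q.
  move=> a b ab bk; have ak := ltn_trans ab bk.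
  have := hJ (Ordinal ak) (Ordinal bk) ab.
  by rewrite -(qE (Ordinal ak)) -(qE (Ordinal bk)).
have bp : bounded m k.+1 p by move=> a _; exact: ltn_ord.
have bq : bounded m k.+1 q by move=> a _; exact: ltn_ord.
have lpq : tuple_le k.+1 p q.
  by move=> a ak; have := hIJ (Ordinal ak); rewrite -(pE (Ordinal ak)) -(qE (Ordinal ak)).
have := minor_elem_prod_gt0 i0 hw hu hs ip iq bp bq (hlifts _ _ _ ip iq lpq bq).
rewrite /minor; congr (0 < \det _); apply/matrixP => a b.
rewrite submx_atE mxE.
by congr (_ _ _); apply: val_inj; rewrite val_ord_of ?(pE a) ?(qE b).
Qed.

Lemma word_prod_cat (R : realType) m (X : nat -> 'M[R]_m) w1 w2 t1 t2 :
  size t1 = size w1 ->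
  word_prod X (w1 ++ w2) (t1 ++ t2) = word_prod X w1 t1 *m word_prod X w2 t2.
Proof.
elim: w1 t1 => [|j w IH] [|t t1] //= hs; first by rewrite /word_prod /= mul1mx.
by rewrite /word_prod /= -mulmxA -/(word_prod _ _ _) IH //; case: hs.
Qed.

Section Factorization.
Variable R : realType.
Variable n : nat.
Hypothesis hn : (1 <= n)%N.

Lemma dim_gt2 : (2 < dim n)%N.
Proof. rewrite /dim; lia. Qed.

Definition ord0_dim : 'I_(dim n) := Ordinal (ltnW (ltnW dim_gt2)).

Lemma E_mul_dim (i j k l : nat) : (j.-1 < dim n)%N ->
  E R (dim n) i j *m E R (dim n) k l = if j.-1 == k.-1 then E R (dim n) i l else 0.
Proof. exact: (@E_mul R _ ord0_dim). Qed.

Lemma expm_Xsl j (u : R) : (0 < j < dim n)%N -> expm (u *: Xsl R n j) = elemx j u.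
Proof.
case/andP => j0 jm; rewrite /Xsl /elemx (expm_sq0 dim_gt2) //.
by rewrite scalemxM E_mul_dim // ifF ?scaler0 //; apply/eqP; lia.
Qed.

Lemma word_prod_Xsl w (us : seq R) : all (fun j => (0 < j < dim n)%N) w ->
  size us = size w -> word_prod (@Xsl R n) w us = elem_prod w us.
Proof.
elim: w us => [|j w IH] [|u us] //= /andP [hj hw] [hs].
by rewrite /word_prod /= expm_Xsl // -/(word_prod _ _ _) IH.
Qed.

Definition sl_params (i : nat) (t : R) : seq R :=
  if i == (2 * n - 1)%N then [:: t / 2%:R; t; t / 2%:R] else [:: t; t].

Lemma size_sl_params i t : size (sl_params i t) = size (sl_of n i).
Proof. by rewrite /sl_params /sl_of; case: eqP. Qed.

Lemma expm_Xso i (t : R) : (0 < i <= 2 * n - 1)%N ->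
  expm (t *: Xso R n i) = word_prod (@Xsl R n) (sl_of n i) (sl_params i t).
Proof.
case/andP=> i0 i2; rewrite /sl_of /sl_params /Xso /Xsl /word_prod.
have E_mul0 : forall a b c d, (0 < b <= dim n)%N -> b.-1 != c.-1 ->
    E R (dim n) a b *m E R (dim n) c d = 0.
  by move=> a b c d /andP [b0 bm] bc; rewrite E_mul_dim ?(negbTE bc) //; lia.
case: eqP => [ei|ni] /=; rewrite mulmx1.
  rewrite ei (_ : (2 * n - 1).+1 = 2 * n)%N; last lia.
  rewrite (_ : (4 * n - 1 - (2 * n - 1)) = 2 * n)%N; last lia.
  rewrite (_ : (4 * n - (2 * n - 1)) = (2 * n).+1)%N; last lia.
  rewrite mulmxA; apply: (expm_add_split dim_gt2); apply: E_mul0;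
    rewrite /dim; apply/andP || apply/eqP; try split; lia.
rewrite (_ : (4 * n - 1 - i).+1 = 4 * n - i)%N; last lia.
apply: (expm_add_sq0 dim_gt2); apply: E_mul0;
  rewrite /dim; apply/andP || apply/eqP; try split; lia.
Qed.

Definition sl_params_of (w : seq nat) (ts : seq R) : seq R :=
  flatten [seq sl_params p.1 p.2 | p <- zip w ts].

Lemma word_prod_Xso w (ts : seq R) : all (fun i => (0 < i <= 2 * n - 1)%N) w ->
  size ts = size w ->
  word_prod (@Xso R n) w ts =
  word_prod (@Xsl R n) (flatten (map (sl_of n) w)) (sl_params_of w ts).
Proof.
elim: w ts => [|i w IH] [|t ts] //= /andP [hi hw] [hs].
rewrite word_prod_cat ?size_sl_params // -expm_Xso //.
by rewrite /word_prod /= -/(word_prod _ _ _) IH.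
Qed.

Lemma size_sl_params_of w (ts : seq R) : size ts = size w ->
  size (sl_params_of w ts) = size (flatten (map (sl_of n) w)).
Proof.
elim: w ts => [|i w IH] [|t ts] //= [hs].
by rewrite !size_cat size_sl_params IH.
Qed.

Lemma sl_params_of_gt0 w (ts : seq R) : all (fun t => 0 < t) ts ->
  all (fun u => 0 < u) (sl_params_of w ts).
Proof.
elim: w ts => [|i w IH] [|t ts] //= /andP [t0 hts].
rewrite all_cat IH // andbT /sl_params; case: eqP => _ /=; rewrite ?t0 //.
by rewrite divr_gt0 ?ltr0n.
Qed.

End Factorization.

Theorem mainTheorem19 (R : realType) (n : nat) (hn : (1 <= n)%N)
  (ts : seq R) (hsize : size ts = size (so_word n))
  (hpos : all (fun t => 0 < t) ts) :
  in_pos_semigroup (@Xsl R n) (sl_word n) (word_prod (@Xso R n) (so_word n) ts)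
  /\ upper_TP (word_prod (@Xso R n) (so_word n) ts).
Proof.
set us := sl_params_of n (so_word n) ts.
have so_sl : word_prod (@Xso R n) (so_word n) ts = word_prod (@Xsl R n) (sl_word n) us.
  by rewrite word_prod_Xso ?sl_word_of_so_word // so_word_letters.
have size_us : size us = size (sl_word n).
  by rewrite size_sl_params_of // sl_word_of_so_word.
have us_gt0 : all (fun u => 0 < u) us by exact: sl_params_of_gt0.
split; first by exists us.
rewrite so_sl word_prod_Xsl //; last exact: sl_word_letters.
apply: (upper_TP_elem_prod (ord0_dim hn)) => //; first exact: sl_word_letters.
by move=> k p q ip iq lpq bq; apply: lifts_sl_word.
Qed.
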